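(* Let $n$ be an odd positive integer and let $p^a$ be a prime power dividing $n$ ($p$ prime, $a\ge1$). Suppose there is a prime $q$ with $n/3<q<n/2$ and $n-2q<p^a$. Then for every integer $k$ with $1\le k\le n-1$, $\binom{n}{k}$ is divisible by $p$ or by $q$. *)

From mathcomp Require Import all_boot.

From mathcomp Require Import all_boot.
From mathcomp Require Import zify.

Set Implicit Arguments.
Unset Strict Implicit.

(* If p does not divide C(n, k) = C(n, n - k), then from
   k C(n, k) = n C(n - 1, k - 1) the prime power p^a | n divides both k and
   n - k.  As n is odd these differ, so the smaller one, say k, satisfies
   k + p^a <= n - k; with n - 2q < p^a this gives k < q, while k >= p^a gives
   n - k < 2q <= n.  Hence 2q is one of the k top factors of the falling
   factorial n^_k = C(n, k) k!, and q, being coprime to k!, divides C(n, k). *)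

Lemma prime_coprime_fact q m : prime q -> m < q -> coprime q m`!.
Proof.
move=> q_prime; elim: m => [|m IHm] lt_m_q; first by rewrite coprimen1.
rewrite factS coprimeMr IHm 1?ltnW // andbT.
by rewrite prime_coprime // gtnNdvd.
Qed.

Lemma dvdn_ffact n m t : t < m -> n - t %| n ^_ m.
Proof.
elim: m => [//|m IHm]; rewrite ltnS leq_eqVlt ffactnSr => /predU1P[-> | lt_t_m].
  exact: dvdn_mull.
exact/dvdn_mulr/IHm.
Qed.

Lemma prime_dvd_bin_top q n k m :
  prime q -> k < q -> n - k < m <= n -> q %| m -> q %| 'C(n, k).
Proof.
move=> q_prime lt_k_q /andP[lt_nk_m le_m_n] q_dvd_m.
rewrite -(Gauss_dvdl _ (prime_coprime_fact q_prime lt_k_q)) bin_ffact.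
apply: dvdn_trans q_dvd_m _.
by rewrite -{1}(subKn le_m_n) dvdn_ffact //; lia.
Qed.

Lemma dvdn_coprime_bin_index d n k :
  coprime d 'C(n, k) -> d %| n -> 0 < k -> d %| k.
Proof.
case: k => // k d_coprime d_dvd_n _.
by rewrite -(Gauss_dvdl _ d_coprime) -mul_bin_diag dvdn_mulr.
Qed.

Lemma dvdn_leq_sub d x y : d %| x -> d %| y -> x < y -> d <= y - x.
Proof. by move=> d_dvd_x d_dvd_y lt_x_y; rewrite dvdn_leq ?subn_gt0 ?dvdn_sub. Qed.

Theorem mainTheorem9 (n p a q : nat) :
  odd n -> prime p -> 1 <= a -> p ^ a %| n ->
  prime q -> n < 3 * q -> 2 * q < n -> n - 2 * q < p ^ a ->
  forall k : nat, 1 <= k <= n - 1 -> (p %| 'C(n, k)) || (q %| 'C(n, k)).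
Proof.
move=> odd_n p_prime _ pa_dvd_n q_prime _ lt_2q_n lt_gap k /andP[k_gt0 lt_k_n].
wlog le_k_nk : k k_gt0 lt_k_n / k <= n - k => [wlog_k|].
  case: (leqP k (n - k)) => [|lt_nk_k]; first exact: wlog_k.
  by rewrite -bin_sub ?wlog_k; lia.
case p_dvd_bin: (p %| 'C(n, k)) => //=.
have pa_coprime : coprime (p ^ a) 'C(n, k).
  by rewrite coprimeXl // prime_coprime // p_dvd_bin.
have pa_dvd_k := dvdn_coprime_bin_index pa_coprime pa_dvd_n k_gt0.
have pa_dvd_nk : p ^ a %| n - k.
  by apply: dvdn_coprime_bin_index pa_dvd_n _; rewrite ?bin_sub //; lia.
have lt_k_nk : k < n - k.
  rewrite ltn_neqAle le_k_nk andbT; apply: contraTneq odd_n => eq_k_nk.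
  by rewrite -(subnKC (leq_trans le_k_nk (leq_subr k n))) -eq_k_nk addnn odd_double.
have gap := dvdn_leq_sub pa_dvd_k pa_dvd_nk lt_k_nk.
have le_pa_k : p ^ a <= k by apply: dvdn_leq.
clear -q_prime lt_2q_n lt_gap gap le_pa_k.
apply: (prime_dvd_bin_top (m := q * 2)) q_prime _ _ _.
- lia.
- lia.
- exact: dvdn_mulr.
Qed.
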